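(* Let $T$ be a discrete space, let $\alpha T=T\cup\{\infty\}$ be its Alexandroff (one-point) compactification, and let $f:\alpha T\to\mathbb R$ be a Baire one function. Then there exists a countable set $S\subseteq T$ such that $f$ is constant on $\alpha T\setminus S$.
   Context: In $\alpha T$ the points of $T$ are isolated and the neighbourhoods of $\infty$ are the sets $\alpha T\setminus E$ with $E\subseteq T$ finite. A function is Baire one if it is the pointwise limit of a sequence of continuous real functions. *)

From HB Require Import structures.
From mathcomp Require Import all_boot all_order all_algebra.
From mathcomp Require Import all_classical all_reals all_analysis.
Set Implicit Arguments. Unset Strict Implicit. Unset Printing Implicit Defensive.
Import Order.TTheory GRing.Theory Num.Theory.
Import numFieldNormedType.Exports.
Local Open Scope classical_set_scope.
Local Open Scope ring_scope.

(* The Alexandroff compactification alpha T of a discrete space T is modelled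
   by the type [option T]: [Some t] is the point t of T, [None] is infinity. *)

(* Open sets of alpha T: every subset is open at points of T (they are isolated);
   a set containing infinity is open iff it contains alpha T \ E for some finite
   E subset of T, i.e. iff its trace-complement in T is finite. *)
Definition alex_open (T : Type) (U : set (option T)) : Prop :=
  U None -> finite_set [set t : T | ~ U (Some t)].

Definition alex_continuous (T : Type) (R : realType) (g : option T -> R) : Prop :=
  forall V : set R, open V -> alex_open (g @^-1` V).

Definition alex_baire_one (T : Type) (R : realType) (f : option T -> R) : Prop :=
  exists g : nat -> option T -> R,
    (forall n, alex_continuous (g n)) /\
    (forall x, (fun n => g n x) @ \oo --> f x).

(* A continuous function g on alpha T takes values at distance at least
   1/(k+1) from g(infinity) only at finitely many points of T, so it differs
   from g(infinity) only on a countable set.  If the g_n converge pointwise to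
   f, the union S of these countable sets is countable, and at every point
   outside S the whole sequence agrees with the sequence at infinity, hence so
   do the limits. *)
From mathcomp Require Import all_boot all_order all_algebra.
From mathcomp Require Import all_classical all_reals all_analysis.
Import Order.TTheory GRing.Theory Num.Theory.
Import numFieldNormedType.Exports.
Local Open Scope classical_set_scope.
Local Open Scope ring_scope.

Section AlexContinuous.
Variables (T : Type) (R : realType) (g : option T -> R).
Hypothesis g_cont : alex_continuous g.

Lemma alex_continuous_far_finite (e : R) : 0 < e ->
  finite_set [set t | e <= `|g (Some t) - g None|].
Proof.
move=> e_gt0; have := g_cont _ (ball_open (g None) e).
have -> : [set t | e <= `|g (Some t) - g None|]
        = [set t | ~ (g @^-1` ball (g None) e) (Some t)].
  by apply/seteqP; split=> t /=; rewrite -ball_normE /= distrC leNgt => /negP.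
by apply; exact: ballxx.
Qed.

Lemma alex_continuous_countable_neq :
  countable [set t | g (Some t) != g None].
Proof.
apply: (@sub_countable _ _ _
  (\bigcup_(k in [set: nat]) [set t | k.+1%:R^-1 <= `|g (Some t) - g None|])).
  apply: subset_card_le => t /= neq_t.
  have [k] : exists k, 0 + k.+1%:R^-1 < `|g (Some t) - g None|.
    by apply: ltr_add_invr; rewrite normr_gt0 subr_eq0.
  by rewrite add0r => /ltW; exists k.
apply: bigcup_countable => [|k _]; first exact: countableP.
exact/finite_set_countable/alex_continuous_far_finite.
Qed.

End AlexContinuous.

Theorem lemma3p1 (T : Type) (R : realType) (f : option T -> R) :
  alex_baire_one f ->
  exists S : set T, countable S /\
    (forall x y : option T,
       (forall t, x = Some t -> ~ S t) ->
       (forall t, y = Some t -> ~ S t) ->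
       f x = f y).
Proof.
move=> [g [g_cont g_cvg]].
pose S := \bigcup_(n in [set: nat]) [set t | g n (Some t) != g n None].
exists S; split.
  apply: bigcup_countable => [|n _]; first exact: countableP.
  exact: alex_continuous_countable_neq.
suff f_infty x : (forall t, x = Some t -> ~ S t) -> f x = f None.
  by move=> x y /f_infty -> /f_infty ->.
move=> x_notin_S.
have same_seq : (fun n => g n x) = (fun n => g n None).
  apply/funext => n; case: x x_notin_S => [t|//] /(_ t erefl) t_notin_S.
  by apply/eqP/negPn/negP => neq_t; apply: t_notin_S; exists n.
have := g_cvg x; rewrite same_seq => /cvg_lim <- //.
exact: cvg_lim (g_cvg None).
Qed.
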